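(* Let $\mathfrak{g}$ be a finite-dimensional nilpotent Lie algebra, and let $M$ be a finite-dimensional non-trivial irreducible Leibniz $\mathfrak{g}$-bimodule. Then $\mathrm{HL}^n(\mathfrak{g},M)=0$ for every positive integer $n$. Moreover, if $M$ is symmetric, then $\mathrm{HL}^n(\mathfrak{g},M)=0$ for every non-negative integer $n$.
   Context: $\mathfrak{g}$ is regarded as a left Leibniz algebra with $xy=[x,y]$. A Leibniz $\mathfrak{g}$-bimodule is a vector space $M$ with bilinear actions $x\cdot m$, $m\cdot x$ satisfying $(xy)\cdot m=x\cdot(y\cdot m)-y\cdot(x\cdot m)$, $(x\cdot m)\cdot y=x\cdot(m\cdot y)-m\cdot(xy)$, $(m\cdot x)\cdot y=m\cdot(xy)-x\cdot(m\cdot y)$; it is irreducible if nonzero with no sub-bimodules other than $0$ and $M$; non-trivial if the actions are not both zero; symmetric if $m\cdot x=-x\cdot m$. $\mathrm{HL}^n(\mathfrak{g},M)$ is the cohomology of $\mathrm{Hom}(\mathfrak{g}^{\otimes n},M)$ with $(\mathrm{d}^nf)(x_1,\dots,x_{n+1})=\sum_{i=1}^n(-1)^{i+1}x_i\cdot f(\dots,\hat{x}_i,\dots)+(-1)^{n+1}f(x_1,\dots,x_n)\cdot x_{n+1}+\sum_{i<j}(-1)^if(x_1,\dots,\hat{x}_i,\dots,x_ix_j,\dots,x_{n+1})$ ($x_ix_j$ in the $j$-th position). *)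

From HB Require Import structures.
From mathcomp Require Import all_boot all_order all_algebra.
Set Implicit Arguments. Unset Strict Implicit. Unset Printing Implicit Defensive.
Import GRing.Theory.
Local Open Scope ring_scope.

Section LeibnizDefs.
Variables (F : fieldType) (g M : vectType F).

Definition is_lie_bracket (br : g -> g -> g) : Prop :=
  [/\ (forall a x y z, br (a *: x + y) z = a *: br x z + br y z),
      (forall a x y z, br z (a *: x + y) = a *: br z x + br z y),
      (forall x, br x x = 0) &
      (forall x y z, br x (br y z) + br y (br z x) + br z (br x y) = 0)].

(* lower central series: C 0 = g, C (k+1) = [g, C k] (spanned by brackets
   of basis vectors, which by bilinearity spans all brackets) *)
Fixpoint lcs (br : g -> g -> g) (k : nat) : {vspace g} :=
  match k with
  | 0 => fullv%VS
  | k'.+1 => <<[seq br x y | x <- (vbasis (fullv : {vspace g}) : seq g),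
                             y <- (vbasis (lcs br k') : seq g)]>>%VS
  end.

Definition lie_nilpotent (br : g -> g -> g) : Prop := exists k, lcs br k = 0%VS.

(* Leibniz g-bimodule (g regarded as left Leibniz algebra with xy = [x,y]) *)
Definition is_leibniz_bimodule (br : g -> g -> g)
    (actl : g -> M -> M) (actr : M -> g -> M) : Prop :=
  [/\ (forall a x y m, actl (a *: x + y) m = a *: actl x m + actl y m),
      (forall a x m n, actl x (a *: m + n) = a *: actl x m + actl x n),
      (forall a x y m, actr m (a *: x + y) = a *: actr m x + actr m y) &
      (forall a x m n, actr (a *: m + n) x = a *: actr m x + actr n x)] /\
  [/\ (forall x y m, actl (br x y) m = actl x (actl y m) - actl y (actl x m)),
      (forall x y m, actr (actl x m) y = actl x (actr m y) - actr m (br x y)) &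
      (forall x y m, actr (actr m x) y = actr m (br x y) - actl x (actr m y))].

Definition is_sub_bimodule (actl : g -> M -> M) (actr : M -> g -> M)
    (U : {vspace M}) : Prop :=
  forall x m, m \in U -> actl x m \in U /\ actr m x \in U.

Definition irreducible_bimodule (actl : g -> M -> M) (actr : M -> g -> M) : Prop :=
  (fullv : {vspace M}) != 0%VS /\
  forall U : {vspace M}, is_sub_bimodule actl actr U -> U = 0%VS \/ U = fullv.

Definition nontrivial_bimodule (actl : g -> M -> M) (actr : M -> g -> M) : Prop :=
  ~ ((forall x m, actl x m = 0) /\ (forall x m, actr m x = 0)).

Definition symmetric_bimodule (actl : g -> M -> M) (actr : M -> g -> M) : Prop :=
  forall x m, actr m x = - actl x m.

(* n-cochains: multilinear maps g^n -> M, i.e. Hom(g^{(x)n}, M) *)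
Definition cochain (n : nat) := {ffun 'I_n -> g} -> M.

Definition upd n (v : {ffun 'I_n -> g}) (i : 'I_n) (x : g) : {ffun 'I_n -> g} :=
  [ffun j => if j == i then x else v j].

Definition multilinear n (f : cochain n) : Prop :=
  forall (v : {ffun 'I_n -> g}) (i : 'I_n) (a : F) (x y : g),
    f (upd v i (a *: x + y)) = a *: f (upd v i x) + f (upd v i y).

Definition del_at n (x : {ffun 'I_n.+1 -> g}) (i : 'I_n.+1) : {ffun 'I_n -> g} :=
  [ffun k => x (lift i k)].

Definition init_of n (x : {ffun 'I_n.+1 -> g}) : {ffun 'I_n -> g} :=
  [ffun k => x (widen_ord (leqnSn n) k)].

(* (x_1,...,hat x_i,..., x_i x_j (in the j-th position),...,x_{n+1}) *)
Definition brk_at (br : g -> g -> g) n (x : {ffun 'I_n.+1 -> g}) (i j : 'I_n.+1)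
  : {ffun 'I_n -> g} :=
  [ffun k => if lift i k == j then br (x i) (x j) else x (lift i k)].

(* Leibniz coboundary d^n; indices are 0-based: position i (0-based) is
   x_{i+1} in the paper, so the paper's signs (-1)^{i+1} resp. (-1)^i become
   (-1)^i resp. (-1)^{i+1}. *)
Definition dL (br : g -> g -> g) (actl : g -> M -> M) (actr : M -> g -> M)
    n (f : cochain n) : cochain n.+1 :=
  fun x =>
    \sum_(i < n.+1 | (i < n)%N) (-1) ^+ i *: actl (x i) (f (del_at x i))
    + (-1) ^+ n.+1 *: actr (f (init_of x)) (x ord_max)
    + \sum_(i < n.+1) \sum_(j < n.+1 | (i < j)%N)
        (-1) ^+ i.+1 *: f (brk_at br x i j).

Definition is_cocycle br actl actr n (f : cochain n) : Prop :=
  forall x, dL br actl actr f x = 0.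

Definition HL_vanishes br actl actr (n : nat) : Prop :=
  match n with
  | 0 => forall f : cochain 0, multilinear f -> is_cocycle br actl actr f ->
           forall x, f x = 0
  | n'.+1 => forall f : cochain n'.+1, multilinear f ->
           is_cocycle br actl actr f ->
           exists h : cochain n', multilinear h /\
             forall x, dL br actl actr h x = f x
  end.

End LeibnizDefs.

From HB Require Import structures.
From mathcomp Require Import all_boot all_order all_algebra.
From Stdlib Require Import Classical.
Set Implicit Arguments. Unset Strict Implicit. Unset Printing Implicit Defensive.
Import GRing.Theory.
Local Open Scope ring_scope.

(* The right annihilator of an irreducible bimodule is 0 or everything, so the
   right action is 0 or minus the left one.  Descending the lower central
   series, which reaches 0, gives z acting non-trivially on the left while
   [z, g] acts trivially on both sides; then m |-> z m commutes with both
   actions, so its kernel is a sub-bimodule and it is invertible, with inverse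
   T commuting with the actions.  Cartan's formula
   d (i_z f) + i_z (d f) = z f - ad_z f, where i_z inserts z as first argument
   and ad_z f = sum_k f (.., [z, x_k], ..), shows that a cocycle f equals
   d (i_z (T f)) + ad_z (T f).  Here ad_z (T f) is again a cocycle, vanishing
   from one lower-central weight below f, and every n-cochain vanishes from
   weight n K; so induction on the weight makes every cocycle of positive
   degree a coboundary.  A 0-cocycle m satisfies m z = 0, which for a
   symmetric bimodule is - z m = 0, so m = 0. *)

Section LinearFacts.
Variables (F : fieldType) (U V : lmodType F) (f : U -> V) (f_lin : linear f).
Let fL : {linear U -> V} := HB.pack f (GRing.isLinear.Build F U V *:%R f f_lin).
Lemma lin0 : f 0 = 0. Proof. exact: (linear0 fL). Qed.
Lemma linD x y : f (x + y) = f x + f y. Proof. exact: (linearD fL). Qed.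
Lemma linZ a x : f (a *: x) = a *: f x. Proof. exact: (linearZZ fL). Qed.
Lemma linN x : f (- x) = - f x. Proof. exact: (linearN fL). Qed.
Lemma linB x y : f (x - y) = f x - f y. Proof. exact: (linearB fL). Qed.
Lemma lin_sum I r (P : pred I) (G : I -> U) :
  f (\sum_(i <- r | P i) G i) = \sum_(i <- r | P i) f (G i).
Proof. exact: (linear_sum fL). Qed.
End LinearFacts.

HB.lock Definition prepend (F : fieldType) (g : vectType F) n (z : g)
  (x : {ffun 'I_n -> g}) : {ffun 'I_n.+1 -> g} :=
  [ffun k => if unlift ord0 k is Some k' then x k' else z].

Section Arguments.
Variables (F : fieldType) (g : vectType F).
Implicit Types (z : g) (n : nat).

Lemma prepend0 n z (x : {ffun 'I_n -> g}) : prepend z x ord0 = z.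
Proof. by rewrite prepend.unlock ffunE unlift_none. Qed.

Lemma prependS n z (x : {ffun 'I_n -> g}) k : prepend z x (lift ord0 k) = x k.
Proof. by rewrite prepend.unlock ffunE liftK. Qed.

Lemma prepend_max n z (x : {ffun 'I_n.+1 -> g}) : prepend z x ord_max = x ord_max.
Proof.
have -> : (ord_max : 'I_n.+2) = lift ord0 ord_max by exact: val_inj.
by rewrite prependS.
Qed.

Lemma lift0_lift n (i : 'I_n.+1) (k : 'I_n) :
  lift (lift ord0 i) (lift ord0 k) = lift ord0 (lift i k).
Proof. by apply: val_inj; rewrite /= /bump !leq0n !add1n ltnS addnS. Qed.

Lemma lift_lift0_ord0 n (i : 'I_n.+1) : lift (lift ord0 i) ord0 = ord0 :> 'I_n.+2.
Proof. exact: val_inj. Qed.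

Lemma del_at_prepend0 n z (x : {ffun 'I_n -> g}) : del_at (prepend z x) ord0 = x.
Proof. by apply/ffunP=> k; rewrite !ffunE prependS. Qed.

Lemma del_at_prependS n z (x : {ffun 'I_n.+1 -> g}) i :
  del_at (prepend z x) (lift ord0 i) = prepend z (del_at x i).
Proof.
apply/ffunP=> k; rewrite !ffunE; case: (unliftP ord0 k) => [k'|] ->.
  by rewrite lift0_lift !prependS ffunE.
by rewrite lift_lift0_ord0 !prepend0.
Qed.

Lemma init_of_prepend n z (x : {ffun 'I_n.+1 -> g}) :
  init_of (prepend z x) = prepend z (init_of x).
Proof.
apply/ffunP=> k; rewrite !ffunE; case: (unliftP ord0 k) => [k'|] ->.
  have -> : widen_ord (leqnSn n.+1) (lift ord0 k') =
            lift ord0 (widen_ord (leqnSn n) k') by exact: val_inj.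
  by rewrite !prependS ffunE.
have -> : widen_ord (leqnSn n.+1) ord0 = ord0 by exact: val_inj.
by rewrite !prepend0.
Qed.

Lemma brk_at_prepend0 (br : g -> g -> g) n z (x : {ffun 'I_n.+1 -> g}) j :
  brk_at br (prepend z x) ord0 (lift ord0 j) = upd x j (br z (x j)).
Proof.
apply/ffunP=> k; rewrite !ffunE (inj_eq (@lift_inj _ ord0)) prepend0 !prependS.
by case: eqP => // ->.
Qed.

Lemma brk_at_prependS (br : g -> g -> g) n z (x : {ffun 'I_n.+1 -> g}) i j :
  brk_at br (prepend z x) (lift ord0 i) (lift ord0 j) = prepend z (brk_at br x i j).
Proof.
apply/ffunP=> k; rewrite !ffunE; case: (unliftP ord0 k) => [k'|] ->.
  by rewrite lift0_lift (inj_eq (@lift_inj _ ord0)) !prependS ffunE.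
rewrite lift_lift0_ord0 !prepend0.
by case: eqP => // /(congr1 val); rewrite /= lift0.
Qed.

Lemma upd_eq n (v : {ffun 'I_n -> g}) i x : upd v i x i = x.
Proof. by rewrite ffunE eqxx. Qed.

Lemma upd_neq n (v : {ffun 'I_n -> g}) i j x : j != i -> upd v i x j = v j.
Proof. by rewrite ffunE => /negbTE ->. Qed.

Lemma upd_id n (v : {ffun 'I_n -> g}) i : upd v i (v i) = v.
Proof. by apply/ffunP=> j; rewrite ffunE; case: eqP => // ->. Qed.

Lemma upd_upd n (v : {ffun 'I_n -> g}) i a b : upd (upd v i a) i b = upd v i b.
Proof. by apply/ffunP=> k; rewrite !ffunE; case: eqP. Qed.

Lemma upd_updC n (v : {ffun 'I_n -> g}) i k a b : k != i ->
  upd (upd v i a) k b = upd (upd v k b) i a.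
Proof.
move=> nki; apply/ffunP=> p; rewrite !ffunE.
by case: (eqVneq p k) => [->|]; rewrite ?(negbTE nki).
Qed.

Lemma prepend_upd n z (v : {ffun 'I_n -> g}) i y :
  prepend z (upd v i y) = upd (prepend z v) (lift ord0 i) y.
Proof.
apply/ffunP=> k; rewrite [RHS]ffunE; case: (unliftP ord0 k) => [k'|] ->.
  by rewrite !prependS ffunE (inj_eq (@lift_inj _ ord0)).
by rewrite !prepend0 (negbTE (neq_lift _ _)).
Qed.

Lemma del_at_upd_lift n (x : {ffun 'I_n.+1 -> g}) i k v :
  del_at (upd x (lift i k) v) i = upd (del_at x i) k v.
Proof. by apply/ffunP=> p; rewrite !ffunE (inj_eq (@lift_inj _ i)). Qed.

Lemma init_of_upd_widen n (x : {ffun 'I_n.+1 -> g}) k v :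
  init_of (upd x (widen_ord (leqnSn n) k) v) = upd (init_of x) k v.
Proof. by apply/ffunP=> p; rewrite !ffunE. Qed.

Lemma upd_widen_max n (x : {ffun 'I_n.+1 -> g}) k v :
  upd x (widen_ord (leqnSn n) k) v ord_max = x ord_max.
Proof. by rewrite upd_neq // neq_ltn /= ltn_ord orbT. Qed.

End Arguments.

Section Cartan.
Variables (F : fieldType) (g M : vectType F) (br : g -> g -> g)
  (actl : g -> M -> M) (actr : M -> g -> M) (z : g).

Definition contraction n (f : cochain g M n.+1) : cochain g M n :=
  fun x => f (prepend z x).

Definition ad_args n (f : cochain g M n) : cochain g M n :=
  fun x => \sum_(k < n) f (upd x k (br z (x k))).

Local Notation d := (dL br actl actr).

Lemma cartan_formula n (f : cochain g M n.+1) (x : {ffun 'I_n.+1 -> g}) :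
  d (contraction f) x + d f (prepend z x) = actl z (f x) - ad_args f x.
Proof.
rewrite /dL /contraction /ad_args.
set A := \sum_(i < n.+1 | (i < n)%N) (-1) ^+ i *: actl (x i) (f (prepend z (del_at x i))).
set C := \sum_(i < n.+1) \sum_(j < n.+1 | (i < j)%N)
           (-1) ^+ i.+1 *: f (prepend z (brk_at br x i j)).
set N := \sum_(k < n.+1) f (upd x k (br z (x k))).
have actl_terms : \sum_(i < n.+2 | (i < n.+1)%N)
    (-1) ^+ i *: actl (prepend z x i) (f (del_at (prepend z x) i)) = actl z (f x) - A.
  rewrite big_mkcond big_ord_recl /= prepend0 del_at_prepend0 expr0 scale1r.
  congr (_ + _); rewrite /A -sumrN [RHS]big_mkcond; apply: eq_bigr => i _.
  rewrite -lift0 ltnS; case: ifP => _ //.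
  by rewrite prependS del_at_prependS exprS mulN1r scaleNr.
have bracket_terms : \sum_(i < n.+2) \sum_(j < n.+2 | (i < j)%N)
    (-1) ^+ i.+1 *: f (brk_at br (prepend z x) i j) = - N - C.
  rewrite big_ord_recl; congr (_ + _).
    rewrite big_mkcond big_ord_recl /= add0r /N -sumrN; apply: eq_bigr => j _.
    by rewrite brk_at_prepend0 expr1 scaleN1r.
  rewrite /C -sumrN; apply: eq_bigr => i _.
  rewrite big_mkcond big_ord_recl /= add0r -sumrN [RHS]big_mkcond.
  apply: eq_bigr => j _; rewrite -!lift0 ltnS; case: ifP => _ //.
  by rewrite brk_at_prependS exprS mulN1r scaleNr.
rewrite actl_terms bracket_terms init_of_prepend prepend_max (exprS _ n.+1) mulN1r scaleNr.
by rewrite addrACA [C + _]addrCA subrr addr0 addrACA [A + _]addrCA !subrr !addr0.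
Qed.

End Cartan.

Section CochainOperations.
Variables (F : fieldType) (g M : vectType F) (br : g -> g -> g)
  (actl : g -> M -> M) (actr : M -> g -> M).
Hypothesis actl_lin : forall x, linear (actl x).
Hypothesis actr_lin : forall x, linear (actr ^~ x).

Local Notation d := (dL br actl actr).

Lemma multilinear_updD n (f : cochain g M n) : multilinear f ->
  forall v i x y, f (upd v i (x + y)) = f (upd v i x) + f (upd v i y).
Proof. by move=> f_ml v i x y; have := f_ml v i 1 x y; rewrite !scale1r. Qed.

Lemma multilinear_upd0 n (f : cochain g M n) : multilinear f ->
  forall v i, f (upd v i 0) = 0.
Proof.
move=> f_ml v i; have := f_ml v i (-1) (v i) (v i).
by rewrite scaleN1r addNr scaleN1r addNr.
Qed.

Lemma multilinear0 n : multilinear (fun _ : {ffun 'I_n -> g} => 0 : M).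
Proof. by move=> v i a x y; rewrite scaler0 addr0. Qed.

Lemma multilinear_add n (f1 f2 : cochain g M n) : multilinear f1 -> multilinear f2 ->
  multilinear (fun x => f1 x + f2 x).
Proof. by move=> f1_ml f2_ml v i a x y; rewrite f1_ml f2_ml scalerDr addrACA. Qed.

Lemma multilinear_comp n (T : M -> M) (f : cochain g M n) :
  linear T -> multilinear f -> multilinear (fun x => T (f x)).
Proof. by move=> T_lin f_ml v i a x y; rewrite f_ml T_lin. Qed.

Lemma multilinear_contraction n z (f : cochain g M n.+1) :
  multilinear f -> multilinear (contraction z f).
Proof. by move=> f_ml v i a x y; rewrite /contraction !prepend_upd f_ml. Qed.

Lemma multilinear_ad_args n z (f : cochain g M n) :
  linear (br z) -> multilinear f -> multilinear (ad_args br z f).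
Proof.
move=> brz_lin f_ml v i a x y; rewrite /ad_args scaler_sumr -big_split /=.
apply: eq_bigr => k _; case: (eqVneq k i) => [->|nki].
  by rewrite !upd_eq !upd_upd brz_lin f_ml.
by rewrite !upd_neq // !(upd_updC _ _ _ nki) f_ml.
Qed.

Lemma dL0 n x : d (fun _ : {ffun 'I_n -> g} => 0 : M) x = 0.
Proof.
rewrite /dL (lin0 (actr_lin _)) scaler0 addr0 big1 ?add0r; last first.
  by move=> i _; rewrite (lin0 (actl_lin _)) scaler0.
by rewrite big1 // => i _; rewrite big1 // => j _; rewrite scaler0.
Qed.

Lemma dL_add n (f1 f2 : cochain g M n) x :
  d (fun y => f1 y + f2 y) x = d f1 x + d f2 x.
Proof.
have regroup (a b c a' b' c' : M) :
    a + b + c + (a' + b' + c') = (a + a') + (b + b') + (c + c').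
  by rewrite addrACA [a + b + _]addrACA.
rewrite /dL (linD (actr_lin _)) scalerDr regroup -!big_split /=.
congr (_ + _ + _); apply: eq_bigr => i _.
  by rewrite (linD (actl_lin _)) scalerDr.
by rewrite -big_split; apply: eq_bigr => j _; rewrite scalerDr.
Qed.

Lemma dL_comp n (T : M -> M) (f : cochain g M n) x :
  linear T -> (forall x m, T (actl x m) = actl x (T m)) ->
  (forall x m, T (actr m x) = actr (T m) x) ->
  d (fun y => T (f y)) x = T (d f x).
Proof.
move=> T_lin Tl Tr.
rewrite /dL !(linD T_lin) !(lin_sum T_lin) !(linZ T_lin) Tr; congr (_ + _ + _).
  by apply: eq_bigr => i _; rewrite (linZ T_lin) Tl.
apply: eq_bigr => i _; rewrite (lin_sum T_lin); apply: eq_bigr => j _.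
by rewrite (linZ T_lin).
Qed.

Section AdArgs.
Variable z : g.
Hypothesis ad_z_derivation : forall a b, br z (br a b) = br (br z a) b + br a (br z b).
Hypothesis actl_ad_z : forall w m, actl (br z w) m = 0.
Hypothesis actr_ad_z : forall w m, actr m (br z w) = 0.

Lemma dL_ad_args n (f : cochain g M n) x : multilinear f ->
  d (ad_args br z f) x = ad_args br z (d f) x.
Proof.
move=> f_ml; rewrite /dL /ad_args [RHS]big_split /= [X in _ = X + _]big_split /=.
congr (_ + _ + _).
- rewrite exchange_big /=; apply: eq_bigr => i lin.
  rewrite (bigD1_ord i) //= upd_eq actl_ad_z scaler0 add0r.
  rewrite lin_sum // scaler_sumr; apply: eq_bigr => k _.
  by rewrite upd_neq ?neq_lift // del_at_upd_lift ffunE.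
- rewrite big_ord_recr /= upd_eq actr_ad_z scaler0 addr0.
  rewrite (lin_sum (actr_lin _)) scaler_sumr; apply: eq_bigr => k _.
  by rewrite upd_widen_max init_of_upd_widen ffunE.
rewrite exchange_big /=; apply: eq_bigr => i _.
rewrite exchange_big /=; apply: eq_bigr => j lij.
rewrite -scaler_sumr; congr (_ *: _).
have [k0 -> _] : {k | j = lift i k & unlift i j = Some k}.
  by apply: unlift_some; rewrite neq_ltn lij.
(* The [k0]-th term of [ad_args] splits, as ad_z is a derivation, into the two
   terms that bracket [z] into the [i]-th and the [j]-th argument. *)
set B := brk_at br x i (lift i k0).
rewrite [RHS](bigD1_ord i) //= [X in _ = _ + X](bigD1 k0) //= [LHS](bigD1 k0) //= addrA.
congr (_ + _).
  have -> : B k0 = br (x i) (x (lift i k0)) by rewrite /B ffunE eqxx.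
  rewrite ad_z_derivation multilinear_updD //.
  congr (_ + _); congr (f _); apply/ffunP=> p; rewrite !ffunE.
  - rewrite !(inj_eq (@lift_inj _ i)) eqxx [lift i k0 == i]eq_sym (negbTE (neq_lift _ _)).
    by case: eqP => // _; rewrite [lift i p == i]eq_sym (negbTE (neq_lift _ _)).
  - rewrite !(inj_eq (@lift_inj _ i)) eqxx (negbTE (neq_lift _ _)).
    by case: eqP.
apply: eq_bigr => k nk.
congr (f _); apply/ffunP=> p; rewrite !ffunE !(inj_eq (@lift_inj _ i)).
rewrite (negbTE nk) [k0 == k]eq_sym (negbTE nk) (negbTE (neq_lift _ _)).
by case: (eqVneq p k) => [->|npk]; rewrite ?(negbTE nk).
Qed.

End AdArgs.
End CochainOperations.

Section WeightInduction.
Variables (F : fieldType) (g M : vectType F) (br : g -> g -> g)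
  (actl : g -> M -> M) (actr : M -> g -> M) (z : g) (T : M -> M) (K : nat).
Hypothesis ad_z_linear : linear (br z).
Hypothesis ad_z_derivation : forall a b, br z (br a b) = br (br z a) b + br a (br z b).
Hypothesis ad_z_lcs : forall k y, y \in lcs br k -> br z y \in lcs br k.+1.
Hypothesis lcs_vanish : forall k, (K <= k)%N -> lcs br k = 0%VS.
Hypothesis actl_lin : forall x, linear (actl x).
Hypothesis actr_lin : forall x, linear (actr ^~ x).
Hypothesis actl_ad_z : forall w m, actl (br z w) m = 0.
Hypothesis actr_ad_z : forall w m, actr m (br z w) = 0.
Hypothesis T_lin : linear T.
Hypothesis actl_zT : forall m, actl z (T m) = m.
Hypothesis T_actl : forall x m, T (actl x m) = actl x (T m).
Hypothesis T_actr : forall x m, T (actr m x) = actr (T m) x.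

Local Notation d := (dL br actl actr).

Definition vanishes_from_weight n (f : cochain g M n) (D : nat) :=
  forall (x : {ffun 'I_n -> g}) (w : 'I_n -> nat),
  (forall i, x i \in lcs br (w i)) -> (D <= \sum_i w i)%N -> f x = 0.

Lemma vanishes_from_weight0 n (f : cochain g M n) :
  vanishes_from_weight f 0 -> forall x, f x = 0.
Proof. by move=> f0 x; apply: (f0 x (fun _ => 0%N)) => // i; exact: memvf. Qed.

Lemma vanishes_from_weight_nilpotent n (f : cochain g M n.+1) :
  multilinear f -> vanishes_from_weight f (n.+1 * K).
Proof.
move=> f_ml x w xw w_big.
case: (boolP [exists i, K <= w i]%N) => [/existsP [i Kwi]|small].
  move: (xw i); rewrite lcs_vanish // memv0 => /eqP xi0.
  by rewrite -(upd_id x i) xi0 multilinear_upd0.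
have : (\sum_(i < n.+1) (w i + 1) <= \sum_(i < n.+1) K)%N.
  apply: leq_sum => i _; rewrite addn1 ltnNge.
  by apply: contra small => Kwi; apply/existsP; exists i.
rewrite sum_nat_const card_ord big_split /= sum_nat_const card_ord muln1.
move=> /leq_trans/(_ w_big).
by rewrite -[X in (_ <= X)%N]addn0 leq_add2l.
Qed.

Lemma vanishes_from_weight_comp n (f : cochain g M n) D :
  vanishes_from_weight f D -> vanishes_from_weight (fun x => T (f x)) D.
Proof. by move=> fD x w xw wD; rewrite (fD x w xw wD) (lin0 T_lin). Qed.

Lemma vanishes_from_weight_ad_args n (f : cochain g M n) D :
  vanishes_from_weight f D.+1 -> vanishes_from_weight (ad_args br z f) D.
Proof.
move=> fD x w xw wD; rewrite /ad_args big1 // => k _.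
apply: (fD _ (fun i => w i + (i == k))%N).
  move=> i; rewrite ffunE; case: eqP => [->|_]; last by rewrite addn0.
  by rewrite addn1; apply: ad_z_lcs.
rewrite big_split /=; have -> : (\sum_(i < n) (i == k) = 1)%N.
  by rewrite (bigD1 k) //= eqxx big1 // => i /negbTE ->.
by rewrite addn1 ltnS.
Qed.

Lemma coboundary_of_weight n D (f : cochain g M n.+1) :
  multilinear f -> is_cocycle br actl actr f -> vanishes_from_weight f D ->
  exists h : cochain g M n, multilinear h /\ forall x, d h x = f x.
Proof.
elim: D f => [|D IH] f f_ml f_cc fD.
  exists (fun _ => 0); split; first exact: multilinear0.
  by move=> x; rewrite dL0 // (vanishes_from_weight0 fD).
pose f' x := T (f x).
have f'_ml : multilinear f' by exact: multilinear_comp.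
have f'_cc : forall x, d f' x = 0 by move=> x; rewrite dL_comp // f_cc (lin0 T_lin).
have [h [h_ml dh]] : exists h : cochain g M n, multilinear h /\
    forall x, d h x = ad_args br z f' x.
  apply: IH; first exact: multilinear_ad_args.
    by move=> x; rewrite dL_ad_args // /ad_args big1 // => k _.
  exact/vanishes_from_weight_ad_args/vanishes_from_weight_comp.
exists (fun x => contraction z f' x + h x); split.
  by apply: multilinear_add => //; apply: multilinear_contraction.
move=> x; rewrite dL_add // dh.
have := cartan_formula br actl actr z f' x; rewrite f'_cc addr0 => ->.
by rewrite /f' actl_zT subrK.
Qed.

End WeightInduction.

Lemma HL0_vanishes (F : fieldType) (g M : vectType F) (br : g -> g -> g)
    (actl : g -> M -> M) (actr : M -> g -> M) (z : g) :
  (forall m, actr m z = 0 -> m = 0) -> HL_vanishes br actl actr 0.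
Proof.
move=> actr_z_inj f _ f_cc x; apply: actr_z_inj.
have all_eq (y : {ffun 'I_0 -> g}) : y = x by apply/ffunP => -[].
have := f_cc [ffun _ => z]; rewrite /dL big1 ?add0r; last by case.
rewrite [X in _ + X]big1 ?addr0; last first.
  by move=> i _; rewrite big1 // => j; rewrite (ord1 i) (ord1 j).
by rewrite expr1 scaleN1r (all_eq (init_of _)) ffunE => /eqP; rewrite oppr_eq0 => /eqP.
Qed.

Section LieFacts.
Variables (F : fieldType) (g : vectType F) (br : g -> g -> g).
Hypothesis br_lie : is_lie_bracket br.

Lemma lie_linearl w : linear (br ^~ w).
Proof. by case: br_lie => br_lin _ _ _ a x y; exact: br_lin. Qed.

Lemma lie_linearr w : linear (br w).
Proof. by case: br_lie => _ br_lin _ _ a x y; exact: br_lin. Qed.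

Lemma lie_anticomm x y : br y x = - br x y.
Proof.
case: br_lie => _ _ brxx _; have := brxx (x + y).
rewrite (linD (lie_linearl _)) !(linD (lie_linearr _)) !brxx add0r addr0 => /eqP.
by rewrite addrC addr_eq0 => /eqP.
Qed.

Lemma lie_derivation z a b : br z (br a b) = br (br z a) b + br a (br z b).
Proof.
case: br_lie => _ _ _ jacobi; have := jacobi z a b.
rewrite [br b z]lie_anticomm (linN (lie_linearr _)) [br b (br z a)]lie_anticomm.
by move/eqP; rewrite -addrA -opprD subr_eq0 => /eqP ->; rewrite addrC.
Qed.

Lemma lcs_bracket x k y : y \in lcs br k -> br x y \in lcs br k.+1.
Proof.
move=> yk /=; rewrite (coord_vbasis (memvf x)) (coord_vbasis yk).
rewrite (lin_sum (lie_linearl _)); apply: rpred_sum => i _.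
rewrite (linZ (lie_linearl _)); apply: rpredZ.
rewrite (lin_sum (lie_linearr _)); apply: rpred_sum => j _.
rewrite (linZ (lie_linearr _)); apply: rpredZ.
by apply/memv_span/allpairs_f; apply: mem_nth; rewrite size_tuple.
Qed.

End LieFacts.

Lemma lcs_eq0 (F : fieldType) (g : vectType F) (br : g -> g -> g) K :
  lcs br K = 0%VS -> forall k, (K <= k)%N -> lcs br k = 0%VS.
Proof.
move=> lcsK; elim=> [|k IH]; first by rewrite leqn0 => /eqP <-.
rewrite leq_eqVlt => /orP [/eqP <- //|]; rewrite ltnS => /IH /= ->.
have -> : vbasis (0%VS : {vspace g}) = [::] :> seq g.
  by apply: size0nil; rewrite size_tuple dimv0.
by rewrite allpairs0r span_nil.
Qed.

Section LinearKernel.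
Variables (F : fieldType) (U V : vectType F) (f : U -> V) (f_lin : linear f).

Definition lfun_of : 'Hom(U, V) :=
  linfun (HB.pack f (GRing.isLinear.Build F U V *:%R f f_lin) : {linear U -> V}).

Lemma lfun_ofE u : lfun_of u = f u. Proof. exact: lfunE. Qed.

Definition kerv : {vspace U} := lker lfun_of.

Lemma mem_kerv u : (u \in kerv) = (f u == 0).
Proof. by rewrite memv_ker lfun_ofE. Qed.

End LinearKernel.

Lemma exists_last_true (P : nat -> Prop) K : P 0%N -> ~ P K -> exists k, P k /\ ~ P k.+1.
Proof.
elim: K => [//|K IH] P0 nPK.
by case: (classic (P K)) => [PK|nPK']; [exists K | exact: IH].
Qed.

Section IrreducibleBimodule.
Variables (F : fieldType) (g M : vectType F) (br : g -> g -> g)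
  (actl : g -> M -> M) (actr : M -> g -> M).
Hypotheses (br_lie : is_lie_bracket br) (M_bimod : is_leibniz_bimodule br actl actr)
  (M_irr : irreducible_bimodule actl actr).

Lemma actl_linear x : linear (actl x).
Proof. by case: M_bimod => [[_ H _ _] _] a u v; exact: H. Qed.
Lemma actl_linear_lie m : linear (actl ^~ m).
Proof. by case: M_bimod => [[H _ _ _] _] a u v; exact: H. Qed.
Lemma actr_linear x : linear (actr ^~ x).
Proof. by case: M_bimod => [[_ _ _ H] _] a u v; exact: H. Qed.
Lemma actr_linear_lie m : linear (actr m).
Proof. by case: M_bimod => [[_ _ H _] _] a u v; exact: H. Qed.

Lemma actl_bracket x y m : actl (br x y) m = actl x (actl y m) - actl y (actl x m).
Proof. by case: M_bimod => _ [H _ _]; exact: H. Qed.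
Lemma actr_actl x y m : actr (actl x m) y = actl x (actr m y) - actr m (br x y).
Proof. by case: M_bimod => _ [_ H _]; exact: H. Qed.
Lemma actr_actr x y m : actr (actr m x) y = actr m (br x y) - actl x (actr m y).
Proof. by case: M_bimod => _ [_ _ H]; exact: H. Qed.

(* The right annihilator {m | m g = 0} is a sub-bimodule containing every x m + m x. *)
Lemma actr_dichotomy :
  (forall x m, actr m x = 0) \/ (forall x m, actr m x = - actl x m).
Proof.
pose b := vbasis (fullv : {vspace g}).
pose phi m := [ffun i : 'I_(\dim (fullv : {vspace g})) => actr m b`_i].
have phi_lin : linear phi.
  by move=> a m n; apply/ffunP => i; rewrite !ffunE (actr_linear _).
have memK m : m \in kerv phi_lin <-> forall y, actr m y = 0.
  rewrite mem_kerv; split => [/eqP/ffunP phi0 y | mK].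
    rewrite (coord_vbasis (memvf y)) (lin_sum (actr_linear_lie m)) big1 // => i _.
    by rewrite (linZ (actr_linear_lie m)); move: (phi0 i); rewrite !ffunE => ->; rewrite scaler0.
  by apply/eqP/ffunP => i; rewrite !ffunE mK.
have K_sub : is_sub_bimodule actl actr (kerv phi_lin).
  move=> x m /memK mK; split; apply/memK => y.
    by rewrite actr_actl !mK (lin0 (actl_linear x)) subr0.
  by rewrite actr_actr !mK (lin0 (actl_linear _)) subr0.
case: M_irr => _ /(_ _ K_sub) [K0|Kfull].
  right => x m; apply/eqP; rewrite -addr_eq0 addrC; apply/eqP.
  have : actl x m + actr m x \in kerv phi_lin.
    apply/memK => y; rewrite (linD (actr_linear y)) actr_actl actr_actr.
    by rewrite addrC addrA subrK subrr.
  by rewrite K0 memv0 => /eqP.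
left => x m; have /memK -> // : m \in kerv phi_lin by rewrite Kfull memvf.
Qed.

Lemma actr_eq0_of_actl_eq0 w : (forall m, actl w m = 0) -> forall m, actr m w = 0.
Proof. by move=> w0 m; case: actr_dichotomy => ->; rewrite ?w0 ?oppr0. Qed.

Lemma exists_actl_ad_trivial K : lcs br K = 0%VS -> nontrivial_bimodule actl actr ->
  exists z, (forall x m, actl (br z x) m = 0) /\ exists m, actl z m != 0.
Proof.
move=> lcsK M_nontriv.
pose acts k := exists z, z \in lcs br k /\ exists m, actl z m != 0.
have acts0 : acts 0%N.
  apply: NNPP => trivial; apply: M_nontriv.
  suff actl0 : forall x m, actl x m = 0 by split=> // x; apply: actr_eq0_of_actl_eq0.
  move=> x m; apply/eqP; apply: contra_notT trivial => xm.
  by exists x; split; [exact: memvf | exists m].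
have not_actsK : ~ acts K.
  by case=> z []; rewrite lcsK memv0 => /eqP -> [m]; rewrite (lin0 (actl_linear_lie m)) eqxx.
have [k [[z [zk zm]] not_acts]] := exists_last_true acts0 not_actsK.
exists z; split=> // x m; apply/eqP; apply: contra_notT not_acts => zxm.
exists (br z x); split; last by exists m.
by rewrite lie_anticomm // rpredN lcs_bracket.
Qed.

Section InvertibleAction.
Variables (z : g) (m0 : M).
Hypotheses (actl_ad_z : forall x m, actl (br z x) m = 0) (actl_z_m0 : actl z m0 != 0).

Lemma actl_z_comm x m : actl x (actl z m) = actl z (actl x m).
Proof.
apply/eqP; rewrite -subr_eq0 -actl_bracket lie_anticomm //.
by rewrite (linN (actl_linear_lie m)) actl_ad_z oppr0.
Qed.

Lemma actr_actl_z x m : actr (actl z m) x = actl z (actr m x).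
Proof. by rewrite actr_actl (@actr_eq0_of_actl_eq0 (br z x) (actl_ad_z x)) subr0. Qed.

Lemma kerv_actl_z : kerv (actl_linear z) = 0%VS.
Proof.
have K_sub : is_sub_bimodule actl actr (kerv (actl_linear z)).
  move=> x m; rewrite !mem_kerv => /eqP zm0; split; apply/eqP.
    by rewrite -actl_z_comm zm0 (lin0 (actl_linear x)).
  by rewrite -actr_actl_z zm0 (lin0 (actr_linear x)).
case: M_irr => _ /(_ _ K_sub) [//|Kfull].
by move: actl_z_m0; rewrite -(mem_kerv (actl_linear z)) Kfull memvf.
Qed.

Lemma actl_z_inj m : actl z m = 0 -> m = 0.
Proof. by move=> /eqP; rewrite -(mem_kerv (actl_linear z)) kerv_actl_z memv0 => /eqP. Qed.

Lemma exists_actl_z_inverse : exists T : M -> M,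
  [/\ linear T, cancel T (actl z),
      forall x m, T (actl x m) = actl x (T m) &
      forall x m, T (actr m x) = actr (T m) x].
Proof.
pose Lz := lfun_of (actl_linear z).
have zT : cancel (Lz^-1)%VF (actl z).
  by move=> m; have := lker0_lfunVK (introT eqP kerv_actl_z) m; rewrite lfun_ofE.
have actl_z_injective : injective (actl z).
  move=> m n /eqP; rewrite -subr_eq0 -(linB (actl_linear z)) => /eqP/actl_z_inj/eqP.
  by rewrite subr_eq0 => /eqP.
exists (Lz^-1)%VF; split => [a u v|//|x m|x m]; first by rewrite linearP.
  by apply: actl_z_injective; rewrite zT -actl_z_comm zT.
by apply: actl_z_injective; rewrite zT -actr_actl_z zT.
Qed.

End InvertibleAction.
End IrreducibleBimodule.

Theorem proposition2p8 (F : fieldType) (g M : vectType F)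
    (br : g -> g -> g) (actl : g -> M -> M) (actr : M -> g -> M) :
  is_lie_bracket br -> lie_nilpotent br ->
  is_leibniz_bimodule br actl actr ->
  irreducible_bimodule actl actr -> nontrivial_bimodule actl actr ->
  (forall n : nat, (0 < n)%N -> HL_vanishes br actl actr n) /\
  (symmetric_bimodule actl actr -> forall n : nat, HL_vanishes br actl actr n).
Proof.
move=> br_lie [K lcsK] M_bimod M_irr M_nontriv.
have [z [actl_ad_z [m0 z_m0]]] := exists_actl_ad_trivial br_lie M_bimod M_irr lcsK M_nontriv.
have [T [T_lin zT T_actl T_actr]] := exists_actl_z_inverse br_lie M_bimod M_irr actl_ad_z z_m0.
have actr_ad_z w m : actr m (br z w) = 0.
  by apply: (actr_eq0_of_actl_eq0 M_bimod M_irr) => n; exact: actl_ad_z.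
have HL_pos n : (0 < n)%N -> HL_vanishes br actl actr n.
  case: n => // n _ f f_ml f_cc.
  apply: (coboundary_of_weight (lie_linearr br_lie z) (lie_derivation br_lie z)
    (lcs_bracket br_lie z) (actl_linear M_bimod)
    (actr_linear M_bimod) actl_ad_z actr_ad_z T_lin zT T_actl T_actr f_ml f_cc).
  exact: (vanishes_from_weight_nilpotent (lcs_eq0 lcsK) f_ml).
split=> // M_sym [|n]; last exact: HL_pos.
apply: (HL0_vanishes (z := z)) => m; rewrite M_sym => /eqP; rewrite oppr_eq0 => /eqP.
exact: (actl_z_inj br_lie M_bimod M_irr actl_ad_z z_m0).
Qed.
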